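(* Let $L$ be a co-Heyting algebra and let $(a_n)_{n<\omega},(b_n)_{n<\omega},(c_n)_{n<\omega}$ be sequences in $L$ with $c_n\le b_n\le a_n$ for every $n$. If $(a_n)$ and $(c_n)$ both converge to the same $l\in L$ for the codimetric pseudometric, then $(b_n)$ converges to $l$.
   Context: A co-Heyting algebra is a bounded distributive lattice $(L,0,1,\vee,\wedge)$ such that $a-b=\min\{c\in L: a\le b\vee c\}$ exists for all $a,b$. Let $a\triangle b=(a-b)\vee(b-a)$. $\operatorname{Spec}L$ is the set of prime filters ordered by inclusion; height = foundation rank there; $\operatorname{codim}_La=\min\{\operatorname{height}\mathfrak p: a\in\mathfrak p\}$ ($+\infty$ if none). The codimetric pseudometric is $\operatorname{dist}_L(a,b)=2^{-\operatorname{codim}_L(a\triangle b)}$ if finite and $0$ otherwise; $(x_n)$ converges to $y$ iff $\operatorname{dist}_L(x_n,y)\to0$. *)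

From HB Require Import structures.
From mathcomp Require Import all_boot all_order.
From Stdlib Require Import Reals ClassicalEpsilon.
Set Implicit Arguments. Unset Strict Implicit. Unset Printing Implicit Defensive.
Import Order.TTheory.
Local Open Scope order_scope.

Section CoHeyting.
Context {disp : Order.disp_t} {L : tbDistrLatticeType disp}.

Definition is_coheyting_sub (sub : L -> L -> L) : Prop :=
  forall a b : L, a <= b `|` sub a b /\ (forall c : L, a <= b `|` c -> sub a b <= c).

Definition symdiff (sub : L -> L -> L) (a b : L) : L := sub a b `|` sub b a.

Record prime_filter (p : L -> Prop) : Prop := {
  pf_top : p \top;
  pf_proper : ~ p \bot;
  pf_up : forall x y : L, p x -> x <= y -> p y;
  pf_meet : forall x y : L, p x -> p y -> p (x `&` y);
  pf_prime : forall x y : L, p (x `|` y) -> p x \/ p y }.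

Definition strict_incl (q p : L -> Prop) : Prop :=
  (forall x, q x -> p x) /\ exists x, p x /\ ~ q x.

(* height_ge p n : the foundation rank of p in Spec L is >= n (finite n). *)
Fixpoint height_ge (p : L -> Prop) (n : nat) : Prop :=
  match n with
  | O => True
  | S m => exists q, prime_filter q /\ strict_incl q p /\ height_ge q m
  end.

(* codim_L a = n (finite): the minimum of the heights of the prime
   filters containing a is exactly n. *)
Definition codim_eq (a : L) (n : nat) : Prop :=
  (forall p, prime_filter p -> p a -> height_ge p n) /\
  (exists p, prime_filter p /\ p a /\ ~ height_ge p (S n)).

Definition cdist (sub : L -> L -> L) (a b : L) : R :=
  match excluded_middle_informative (exists n, codim_eq (symdiff sub a b) n) with
  | left H => (/ 2 ^ (proj1_sig (constructive_indefinite_description _ H)))%R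
  | right _ => 0%R
  end.

Definition cconverges (sub : L -> L -> L) (x : nat -> L) (y : L) : Prop :=
  Un_cv (fun n => cdist sub (x n) y) 0%R.

End CoHeyting.

(** A prime filter containing [b △ l] contains [(a △ l) ∨ (c △ l)] whenever
    [c <= b <= a], hence contains [a △ l] or [c △ l].  So the codimension of
    [b △ l] is at least the smaller of the codimensions of [a △ l] and
    [c △ l], and the convergence of [b] follows because convergence means
    that the codimension of the symmetric difference tends to infinity. *)
From Stdlib Require Import Reals Lra Classical ClassicalEpsilon.
From HB Require Import structures.
From mathcomp Require Import all_boot all_order.
Import Order.TTheory.

Set Implicit Arguments.

Section Codimension.
Context {disp : Order.disp_t} {L : tbDistrLatticeType disp}.
Local Open Scope order_scope.

Lemma height_geW (p : L -> Prop) m n :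
  (m <= n)%N -> height_ge p n -> height_ge p m.
Proof.
elim: n m p => [|n IHn] [|m] p //= lemn [q [pfq [qp hq]]].
by exists q; split; [|split; [|exact: IHn hq]].
Qed.

(* [codim_ge x N] reads [N <= codim_L x]; it also covers [codim_L x = +oo]. *)
Definition codim_ge (x : L) (N : nat) : Prop :=
  forall p, prime_filter p -> p x -> height_ge p N.

Lemma codim_geW (x : L) m n : (m <= n)%N -> codim_ge x n -> codim_ge x m.
Proof. by move=> lemn xn p pfp px; apply: height_geW _ lemn (xn p pfp px). Qed.

Lemma codim_ge_le_codim (x : L) n N : codim_eq x n -> codim_ge x N -> (N <= n)%N.
Proof.
move=> [_ [p [pfp [px not_hSn]]]] xN; rewrite leqNgt; apply/negP => ltnN.
by apply: not_hSn; apply: height_geW ltnN _; exact: xN.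
Qed.

Lemma codim_ge_infinite (x : L) N :
  ~ (exists n, codim_eq x n) -> codim_ge x N.
Proof.
move=> no_codim; elim: N => [|N IHN] p pfp px //.
(* Otherwise [p] would witness [codim_eq x N]. *)
apply: NNPP => not_hSN; apply: no_codim; exists N; split=> //.
by exists p.
Qed.

Lemma codim_ge_join {x y z : L} N :
  x <= y `|` z -> codim_ge y N -> codim_ge z N -> codim_ge x N.
Proof.
move=> lexyz yN zN p pfp px.
by case: (pf_prime pfp (pf_up pfp px lexyz)); [exact: yN | exact: zN].
Qed.

End Codimension.

Section Distance.
Context {disp : Order.disp_t} {L : tbDistrLatticeType disp}.
Local Open Scope R_scope.
Variable sub : L -> L -> L.

Lemma inv_pow2_gt0 N : 0 < / 2 ^ N.
Proof. by apply: Rinv_0_lt_compat; apply: pow_lt; lra. Qed.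

Lemma inv_pow2_le {m n : nat} : (m <= n)%N -> / 2 ^ n <= / 2 ^ m.
Proof.
move=> lemn; apply: Rinv_le_contravar; first by apply: pow_lt; lra.
by apply: Rle_pow; [lra | apply/ssrnat.leP].
Qed.

Lemma inv_pow2_lt_eps eps : 0 < eps -> exists N, / 2 ^ N < eps.
Proof.
move=> eps_gt0.
have [N /(_ N (Nat.le_refl N))] := pow_lt_1_zero (/ 2)
  ltac:(rewrite Rabs_pos_eq; lra) eps eps_gt0.
rewrite Rabs_pos_eq ?pow_inv; first by exists N.
exact/Rlt_le/inv_pow2_gt0.
Qed.

Lemma cdist_ge0 (x y : L) : 0 <= cdist sub x y.
Proof.
rewrite /cdist; case: excluded_middle_informative => [?|_]; last lra.
exact/Rlt_le/inv_pow2_gt0.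
Qed.

Lemma cdist_le (x y : L) N :
  codim_ge (symdiff sub x y) N -> cdist sub x y <= / 2 ^ N.
Proof.
move=> xyN; rewrite /cdist; case: excluded_middle_informative => [fin|_].
  case: constructive_indefinite_description => n xyn /=.
  exact/inv_pow2_le/(codim_ge_le_codim xyn).
exact/Rlt_le/inv_pow2_gt0.
Qed.

Lemma codim_ge_of_cdist_lt (x y : L) N :
  cdist sub x y < / 2 ^ N -> codim_ge (symdiff sub x y) N.
Proof.
rewrite /cdist; case: excluded_middle_informative => [fin|no_codim _].
  case: constructive_indefinite_description => n [xyn _] /= lt_inv.
  apply: codim_geW xyn; rewrite leqNgt; apply/negP => ltnN.
  have := inv_pow2_le (ltnW ltnN); lra.
exact: codim_ge_infinite.
Qed.

Lemma cconvergesP (x : nat -> L) (y : L) :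
  cconverges sub x y <->
  forall N, exists M, forall n, (M <= n)%coq_nat -> codim_ge (symdiff sub (x n) y) N.
Proof.
split=> [conv N | codim_big eps eps_gt0].
  have [M HM] := conv _ (inv_pow2_gt0 N); exists M => n leMn.
  apply: codim_ge_of_cdist_lt; move: (HM n leMn).
  by rewrite /R_dist Rminus_0_r Rabs_pos_eq //; exact: cdist_ge0.
have [N ltN] := inv_pow2_lt_eps eps_gt0.
have [M HM] := codim_big N; exists M => n leMn.
rewrite /R_dist Rminus_0_r Rabs_pos_eq; last exact: cdist_ge0.
by apply: Rle_lt_trans ltN; apply: cdist_le; apply: HM.
Qed.

End Distance.

Section CoHeytingDifference.
Context {disp : Order.disp_t} {L : tbDistrLatticeType disp}.
Local Open Scope order_scope.
Variable sub : L -> L -> L.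
Hypothesis hsub : is_coheyting_sub sub.

Lemma sub_le_min (a b c : L) : a <= b `|` c -> sub a b <= c.
Proof. exact: (proj2 (hsub a b)). Qed.

Lemma le_join_sub (a b : L) : a <= b `|` sub a b.
Proof. exact: (proj1 (hsub a b)). Qed.

Lemma subSl (b : L) {a a' : L} : a <= a' -> sub a b <= sub a' b.
Proof. by move=> leaa'; apply/sub_le_min/(le_trans leaa')/le_join_sub. Qed.

Lemma subSr (a : L) {b b' : L} : b' <= b -> sub a b <= sub a b'.
Proof.
by move=> leb'b; apply/sub_le_min/(le_trans (le_join_sub a b'))/leU2.
Qed.

Lemma symdiff_between (l : L) {a b c : L} : c <= b -> b <= a ->
  symdiff sub b l <= symdiff sub a l `|` symdiff sub c l.
Proof.
move=> lecb leba; rewrite /symdiff leUx; apply/andP; split.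
  by apply: le_trans (subSl l leba) _; apply: le_trans (leUl _ _) (leUl _ _).
by apply: le_trans (subSr l lecb) _; apply: le_trans (leUr _ _) (leUr _ _).
Qed.

End CoHeytingDifference.

Theorem theorem7p6 (disp : Order.disp_t) (L : tbDistrLatticeType disp)
  (sub : L -> L -> L) (hsub : is_coheyting_sub sub)
  (a b c : nat -> L) (l : L) :
  (forall n, (c n <= b n)%O /\ (b n <= a n)%O) ->
  cconverges sub a l -> cconverges sub c l -> cconverges sub b l.
Proof.
move=> between /cconvergesP conv_a /cconvergesP conv_c; apply/cconvergesP => N.
have [Ma HMa] := conv_a N; have [Mc HMc] := conv_c N.
exists (Nat.max Ma Mc) => n leMn; have [lecb leba] := between n.
apply: codim_ge_join (symdiff_between hsub l lecb leba) _ _.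
- by apply: HMa; apply: Nat.le_trans leMn; apply: Nat.le_max_l.
- by apply: HMc; apply: Nat.le_trans leMn; apply: Nat.le_max_r.
Qed.
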